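(* In the mirror triangle method with stochastic $(\delta,L)$-oracle (see context), write $l_f^\delta(x;y)=f_\delta(y)+\langle\tilde\nabla^{m_{k+1}}f_\delta(y),x-y\rangle$. Then at every step $k+1$, for all $x\in Q$, $$l_f^\delta(x_{k+1};y_{k+1})+\frac{L_{k+1}}2\|x_{k+1}-y_{k+1}\|^2+h(x_{k+1})\le\frac{A_k}{A_{k+1}}\big(l_f^\delta(x_k;y_{k+1})+h(x_k)\big)+\frac{\alpha_{k+1}}{A_{k+1}}\Big(l_f^\delta(x;y_{k+1})+h(x)+\frac1{\alpha_{k+1}}V(x,u_k)-\frac1{\alpha_{k+1}}V(x,u_{k+1})\Big).$$
   Context: $\mathbb{R}^n$ carries the Euclidean norm; $Q$ closed convex, $D_Q\ge\max_{x,y\in Q}\|x-y\|$ finite; $f:Q\to\mathbb{R}$ convex with $L$-Lipschitz gradient; $h$ convex on $Q$. Prox-function $d$ ($C^1$, $1$-strongly convex), $V(x,y)=d(x)-d(y)-\langle\nabla d(y),x-y\rangle$. Stochastic $(\delta,L)$-oracle: for query $y\in Q$ returns $(f_\delta(y),\nabla f_\delta(y;\xi))$ such that for some vector $\nabla f_\delta(y)$: $0\le f(x)-f_\delta(y)-\langle\nabla f_\delta(y),x-y\rangle\le\frac L2\|x-y\|^2+\delta$ for all $x\in Q$; $\mathbb{E}\nabla f_\delta(y;\xi)=\nabla f_\delta(y)$; $\mathbb{E}\exp(\|\nabla f_\delta(y;\xi)-\nabla f_\delta(y)\|^2/D)\le e$ ($D>0$). Method with $x_0\in Q$, $\varepsilon>0$,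 $\beta\in(0,1)$: $N=\lceil2\sqrt3\sqrt LD_Q/\sqrt\varepsilon\rceil$, $\Omega=\sqrt{2\ln(N/\beta)}$, $\tilde\Omega=1+2\Omega+\Omega^2$; $y_0=u_0=x_0$, $L_1=L/2$, $\alpha_0=A_0=0$. Step $k+1$ with current $L_{k+1}$: (i) $\alpha_{k+1}$ largest root of $A_k+\alpha=L_{k+1}\alpha^2$, $A_{k+1}=A_k+\alpha_{k+1}$; (ii) $y_{k+1}=(\alpha_{k+1}u_k+A_kx_k)/A_{k+1}$; (iii) $m_{k+1}=\lceil3D\tilde\Omega\alpha_{k+1}/\varepsilon\rceil$, query the oracle $m_{k+1}$ times independently at $y_{k+1}$, $\tilde\nabla^{m_{k+1}}f_\delta(y_{k+1})=\frac1{m_{k+1}}\sum_j\nabla f_\delta(y_{k+1};\xi_j)$; (iv) $u_{k+1}=\arg\min_{x\in Q}\{V(x,u_k)+\alpha_{k+1}(f_\delta(y_{k+1})+\langle\tilde\nabla^{m_{k+1}}f_\delta(y_{k+1}),x-y_{k+1}\rangle+h(x))\}$; (v) $x_{k+1}=(\alpha_{k+1}u_{k+1}+A_kx_k)/A_{k+1}$; (vi) if $f_\delta(x_{k+1})\le f_\delta(y_{k+1})+\langle\tilde\nabla^{m_{k+1}}f_\delta(y_{k+1}),x_{k+1}-y_{k+1}\rangle+\frac{L_{k+1}}2\|x_{k+1}-y_{k+1}\|^2+\frac{3D\tilde\Omega}{L_{k+1}m_{k+1}}+\delta$, set $L_{k+2}=L_{k+1}/2$ and go on; otherwise replace $L_{k+1}$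 by $2L_{k+1}$ and repeat step $k+1$. *)

(* R^n is represented by row vectors 'rV[R]_n,
   equipped explicitly with the Euclidean inner product and norm
   (MathComp's own norm on matrices is the max-norm, which is NOT used). *)
From HB Require Import structures.
From mathcomp Require Import all_boot all_order all_algebra.
From mathcomp Require Import all_classical all_reals all_analysis.
Set Implicit Arguments. Unset Strict Implicit. Unset Printing Implicit Defensive.
Import Order.TTheory GRing.Theory Num.Theory.
Import numFieldNormedType.Exports.
Local Open Scope classical_set_scope.
Local Open Scope ring_scope.

Section Defs.
Context {R : realType} {n : nat}.
Local Notation vec := 'rV[R]_n.

Definition dotp (x y : vec) : R := \sum_(i < n) x ord0 i * y ord0 i.
Definition sqnorm (x : vec) : R := dotp x x.
Definition enorm (x : vec) : R := Num.sqrt (sqnorm x).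

Definition is_convex_set (Q : set vec) : Prop :=
  forall a b (t : R), Q a -> Q b -> 0 <= t <= 1 -> Q (t *: a + (1 - t) *: b).

Definition convex_fun_on (Q : set vec) (h : vec -> R) : Prop :=
  forall a b (t : R), Q a -> Q b -> 0 <= t <= 1 ->
    h (t *: a + (1 - t) *: b) <= t * h a + (1 - t) * h b.

Definition C1_with_gradient (d : vec -> R) (gd : vec -> vec) : Prop :=
  (forall y, differentiable d y /\ forall v, 'd d y v = dotp (gd y) v)
  /\ continuous gd.

Definition strongly_convex1_on (Q : set vec) (d : vec -> R) (gd : vec -> vec) : Prop :=
  forall a b, Q a -> Q b -> d b + dotp (gd b) (a - b) + 2^-1 * sqnorm (a - b) <= d a.

Definition bregman (d : vec -> R) (gd : vec -> vec) (a b : vec) : R :=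
  d a - d b - dotp (gd b) (a - b).

(* l_f^delta(x; y) = f_delta(y) + <g, x - y>, g the averaged stochastic gradient at y *)
Definition lfd (fdelta : vec -> R) (g y a : vec) : R := fdelta y + dotp g (a - y).

End Defs.

(* With t = alpha_{k+1} / A_{k+1}, the point x_{k+1} is the convex combination
   t u_{k+1} + (1 - t) x_k and x_{k+1} - y_{k+1} = t (u_{k+1} - u_k).  Convexity of
   the model phi = l_f^delta(.; y_{k+1}) + h bounds phi(x_{k+1}) by the same
   combination of phi(u_{k+1}) and phi(x_k), and the step rule
   L_{k+1} alpha_{k+1}^2 = A_{k+1} makes the quadratic term equal to
   |u_{k+1} - u_k|^2 / (2 A_{k+1}) <= V(u_{k+1}, u_k) / A_{k+1}.  It remains to bound
   alpha phi(u_{k+1}) + V(u_{k+1}, u_k) by alpha phi(x) + V(x, u_k) - V(x, u_{k+1}):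
   this three-point inequality of the prox step follows from its first-order
   optimality condition and the three-point identity of the Bregman divergence. *)
From mathcomp Require Import all_boot all_order all_algebra.
From mathcomp Require Import all_classical all_reals all_analysis.
From mathcomp Require Import ring lra.
Set Implicit Arguments. Unset Strict Implicit. Unset Printing Implicit Defensive.
Import Order.TTheory GRing.Theory Num.Theory.
Import numFieldNormedType.Exports.
Local Open Scope classical_set_scope.
Local Open Scope ring_scope.

Lemma largest_root_gt0 (R : realFieldType) (L A a : R) :
  0 < L -> A + a = L * a ^+ 2 -> (forall b, A + b = L * b ^+ 2 -> b <= a) -> 0 < a.
Proof.
move=> L_gt0 a_root a_max.
(* the two roots of L b^2 - b - A sum to 1 / L *)
have /a_max : A + (L^-1 - a) = L * (L^-1 - a) ^+ 2.
  rewrite -[A](addrK a) a_root; field; exact: lt0r_neq0.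
have : 0 < L^-1 by rewrite invr_gt0.
lra.
Qed.

Section RowVectors.
Variables (R : realType) (n : nat).
Implicit Types (p q r : 'rV[R]_n) (a b t : R).

Lemma dotpDr p q r : dotp p (q + r) = dotp p q + dotp p r.
Proof. by rewrite /dotp -big_split; apply: eq_bigr => i _; rewrite mxE mulrDr. Qed.

Lemma dotpBr p q r : dotp p (q - r) = dotp p q - dotp p r.
Proof. by rewrite /dotp -sumrB; apply: eq_bigr => i _; rewrite !mxE mulrBr. Qed.

Lemma dotpZr p q t : dotp p (t *: q) = t * dotp p q.
Proof. by rewrite /dotp mulr_sumr; apply: eq_bigr => i _; rewrite mxE mulrCA. Qed.

Lemma dotpZl p q t : dotp (t *: p) q = t * dotp p q.
Proof. by rewrite /dotp mulr_sumr; apply: eq_bigr => i _; rewrite mxE mulrA. Qed.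

Lemma sqnormZ p t : sqnorm (t *: p) = t ^+ 2 * sqnorm p.
Proof. by rewrite /sqnorm dotpZl dotpZr mulrA expr2. Qed.

Definition wmean a b p q : 'rV[R]_n := (a + b)^-1 *: (a *: p + b *: q).

Lemma wmeanE a b p q : a + b != 0 ->
  wmean a b p q = (a / (a + b)) *: p + (1 - a / (a + b)) *: q.
Proof.
move=> ab_neq0; rewrite /wmean scalerDr !scalerA mulrC.
by congr (_ + _ *: _); field.
Qed.

Lemma wmeanBl a b p q r : wmean a b p r - wmean a b q r = (a / (a + b)) *: (p - q).
Proof.
by rewrite /wmean -scalerBr opprD addrACA subrr addr0 -scalerBr scalerA mulrC.
Qed.

Lemma wmean_weight01 a b : 0 < a -> 0 <= b -> 0 <= a / (a + b) <= 1.
Proof.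
move=> a_gt0 b_ge0; have ab_gt0 : 0 < a + b by rewrite ltr_wpDr.
by rewrite divr_ge0 ?(ltW a_gt0) ?(ltW ab_gt0) //= ler_pdivrMr // mul1r lerDl.
Qed.

Lemma convex_wmean (Q : set 'rV[R]_n) a b p q : is_convex_set Q ->
  0 < a -> 0 <= b -> Q p -> Q q -> Q (wmean a b p q).
Proof.
move=> Qconv a_gt0 b_ge0 Qp Qq; rewrite wmeanE ?lt0r_neq0 ?ltr_wpDr //.
exact: Qconv _ _ _ Qp Qq (wmean_weight01 a_gt0 b_ge0).
Qed.

Lemma lfd_affine (f : 'rV[R]_n -> R) G y p q t :
  lfd f G y (t *: p + (1 - t) *: q) = t * lfd f G y p + (1 - t) * lfd f G y q.
Proof. by rewrite /lfd !dotpBr !dotpDr !dotpZr; ring. Qed.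

Lemma convex_fun_on_lfdD (Q : set 'rV[R]_n) (f h : 'rV[R]_n -> R) G y :
  convex_fun_on Q h -> convex_fun_on Q (fun w => lfd f G y w + h w).
Proof. by move=> hconv p q t Qp Qq /(hconv p q t Qp Qq); rewrite lfd_affine; lra. Qed.

Lemma convex_fun_onZ (Q : set 'rV[R]_n) (phi : 'rV[R]_n -> R) a :
  0 <= a -> convex_fun_on Q phi -> convex_fun_on Q (fun w => a * phi w).
Proof.
move=> a_ge0 phiconv p q t Qp Qq /(phiconv p q t Qp Qq) /(ler_wpM2l a_ge0).
lra.
Qed.

Lemma bregman_three_point (d : 'rV[R]_n -> R) gd p q r :
  bregman d gd p r
  = bregman d gd p q + bregman d gd q r + (dotp (gd q) (p - q) - dotp (gd r) (p - q)).
Proof.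
rewrite /bregman.
have -> : p - r = (p - q) + (q - r) by rewrite addrA subrK.
by rewrite dotpDr; ring.
Qed.

Lemma dotp_gradient_ge (d : 'rV[R]_n -> R) gd p q (c : R) :
  C1_with_gradient d gd ->
  (forall t, 0 < t <= 1 -> c <= t^-1 * (d (t *: q + p) - d p)) ->
  c <= dotp (gd p) q.
Proof.
move=> [/(_ p) [dp <-] _] quot_ge.
rewrite -deriveE //.
have /cvgr_to_ge := cvg_dnbhs_at_right (@diff_derivable _ _ _ d p q dp); apply.
near=> t.
have t01 : 0 < t <= 1.
  by apply/andP; split; near: t; [exact: nbhs_right_gt | exact: nbhs_right_le].
exact: quot_ge t01.
Unshelve. all: by end_near.
Qed.

End RowVectors.

Section MirrorStep.
Variables (R : realType) (n : nat) (Q : set 'rV[R]_n).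
Variables (d : 'rV[R]_n -> R) (gd : 'rV[R]_n -> 'rV[R]_n).
Hypothesis Qconv : is_convex_set Q.
Hypothesis dC1 : C1_with_gradient d gd.
Hypothesis dsc : strongly_convex1_on Q d gd.
Local Notation V := (bregman d gd).

Lemma bregman_ge_sqnorm p q : Q p -> Q q -> 2^-1 * sqnorm (p - q) <= V p q.
Proof. by move=> Qp Qq; have := dsc Qp Qq; rewrite /bregman; lra. Qed.

Section Prox.
Variables (psi : 'rV[R]_n -> R) (u w : 'rV[R]_n).
Hypothesis psiconv : convex_fun_on Q psi.
Hypothesis Qw : Q w.
Hypothesis w_min : forall z, Q z -> V w u + psi w <= V z u + psi z.

Lemma prox_first_order z : Q z ->
  psi w - psi z <= dotp (gd w) (z - w) - dotp (gd u) (z - w).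
Proof.
move=> Qz.
(* compare the prox objective at w and at w + s (z - w), then let s -> 0+ *)
suff : psi w - psi z + dotp (gd u) (z - w) <= dotp (gd w) (z - w) by lra.
apply: (dotp_gradient_ge dC1) => s /andP [s_gt0 s_le1].
have s01 : 0 <= s <= 1 by rewrite ltW.
have ws_min := w_min (Qconv Qz Qw s01).
have psi_ws := psiconv Qz Qw s01.
have ws_def : s *: (z - w) + w = s *: z + (1 - s) *: w.
  by rewrite scalerBr scalerBl scale1r addrA addrAC.
have ws_u : s *: z + (1 - s) *: w - u = s *: (z - w) + (w - u).
  by rewrite -ws_def addrA.
rewrite ws_def ler_pdivlMl //.
move: ws_min; rewrite /bregman ws_u [dotp _ (s *: _ + _)]dotpDr dotpZr; lra.
Qed.

Lemma prox_three_point z : Q z -> V w u + V z w + psi w <= V z u + psi z.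
Proof.
move=> Qz; have := prox_first_order Qz.
by rewrite (bregman_three_point d gd z w u); lra.
Qed.

End Prox.

Lemma mirror_triangle_step (phi : 'rV[R]_n -> R) (Lk a b : R) (u u' x z : 'rV[R]_n) :
  convex_fun_on Q phi -> 0 < a -> 0 <= b -> Lk * a ^+ 2 = a + b ->
  Q u -> Q u' -> Q x -> Q z ->
  (forall z, Q z -> V u' u + a * phi u' <= V z u + a * phi z) ->
  phi (wmean a b u' x) + Lk / 2 * sqnorm (wmean a b u' x - wmean a b u x)
  <= b / (a + b) * phi x + a / (a + b) * (phi z + a^-1 * V z u - a^-1 * V z u').
Proof.
move=> phiconv a_gt0 b_ge0 step_rule Qu Qu' Qx Qz u'_min.
have ab_gt0 : 0 < a + b by rewrite ltr_wpDr.
have Lk_neq0 : Lk != 0.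
  by apply: contraTneq ab_gt0 => Lk0; rewrite -step_rule Lk0 mul0r ltxx.
set t := a / (a + b).
have phi_x' : phi (wmean a b u' x) <= t * phi u' + (1 - t) * phi x.
  rewrite wmeanE ?lt0r_neq0 //.
  exact: phiconv _ _ _ Qu' Qx (wmean_weight01 a_gt0 b_ge0).
have quad : Lk / 2 * sqnorm (wmean a b u' x - wmean a b u x)
            = (a + b)^-1 * (2^-1 * sqnorm (u' - u)).
  by rewrite wmeanBl sqnormZ /t -step_rule; field; rewrite Lk_neq0 lt0r_neq0.
have three : V u' u + V z u' + a * phi u' <= V z u + a * phi z.
  exact: (prox_three_point (convex_fun_onZ (ltW a_gt0) phiconv) Qu' u'_min Qz).
have descent : 2^-1 * sqnorm (u' - u) + a * phi u' <= V z u + a * phi z - V z u'.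
  by have := bregman_ge_sqnorm Qu' Qu; lra.
have inv_ab_ge0 : 0 <= (a + b)^-1 by rewrite invr_ge0 ltW.
have := ler_wpM2l inv_ab_ge0 descent.
have -> : b / (a + b) = 1 - t by rewrite /t; field; exact: lt0r_neq0.
have -> : t * (phi z + a^-1 * V z u - a^-1 * V z u')
          = (a + b)^-1 * (V z u + a * phi z - V z u').
  by rewrite /t; field; rewrite !lt0r_neq0.
rewrite quad; move: phi_x'; rewrite /t; lra.
Qed.

End MirrorStep.

Theorem lemma7 (R : realType) (n : nat)
  (Q : set 'rV[R]_n) (DQ : R) (h d : 'rV[R]_n -> R) (gd : 'rV[R]_n -> 'rV[R]_n)
  (fdelta : 'rV[R]_n -> R) (L : R) (x0 : 'rV[R]_n)
  (Ls A alpha : nat -> R) (x y u g : nat -> 'rV[R]_n) :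
  closed Q -> is_convex_set Q ->
  (forall a b, Q a -> Q b -> enorm (a - b) <= DQ) ->
  convex_fun_on Q h ->
  C1_with_gradient d gd -> strongly_convex1_on Q d gd ->
  0 < L -> Q x0 ->
  (* initialisation *)
  y 0%N = x0 -> u 0%N = x0 -> x 0%N = x0 -> Ls 1%N = L / 2 -> alpha 0%N = 0 -> A 0%N = 0 ->
  (* backtracking: the accepted L_{k+2} is L_{k+1}/2 doubled j times *)
  (forall k, exists j : nat, Ls k.+2 = Ls k.+1 / 2 * 2 ^+ j) ->
  (* (i) alpha_{k+1} largest root of A_k + a = L_{k+1} a^2 ; A_{k+1} = A_k + alpha_{k+1} *)
  (forall k, A k + alpha k.+1 = Ls k.+1 * alpha k.+1 ^+ 2 /\
             (forall b, A k + b = Ls k.+1 * b ^+ 2 -> b <= alpha k.+1)) ->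
  (forall k, A k.+1 = A k + alpha k.+1) ->
  (* (ii) *)
  (forall k, y k.+1 = (A k.+1)^-1 *: (alpha k.+1 *: u k + A k *: x k)) ->
  (* (iv) with g k.+1 the realised averaged stochastic gradient at y k.+1 *)
  (forall k, Q (u k.+1) /\
     forall z, Q z ->
       bregman d gd (u k.+1) (u k)
         + alpha k.+1 * (lfd fdelta (g k.+1) (y k.+1) (u k.+1) + h (u k.+1))
       <= bregman d gd z (u k)
         + alpha k.+1 * (lfd fdelta (g k.+1) (y k.+1) z + h z)) ->
  (* (v) *)
  (forall k, x k.+1 = (A k.+1)^-1 *: (alpha k.+1 *: u k.+1 + A k *: x k)) ->
  forall (k : nat) (z : 'rV[R]_n), Q z ->
    lfd fdelta (g k.+1) (y k.+1) (x k.+1) + Ls k.+1 / 2 * sqnorm (x k.+1 - y k.+1)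
      + h (x k.+1)
    <= A k / A k.+1 * (lfd fdelta (g k.+1) (y k.+1) (x k) + h (x k))
       + alpha k.+1 / A k.+1 *
         (lfd fdelta (g k.+1) (y k.+1) z + h z
          + (alpha k.+1)^-1 * bregman d gd z (u k)
          - (alpha k.+1)^-1 * bregman d gd z (u k.+1)).
Proof.
move=> _ Qconv _ hconv dC1 dsc L_gt0 Qx0 _ u0 x0E Ls1 _ A0
  Ls_next alpha_root A_next y_next u_next x_next k z Qz.
have Ls_gt0 : forall j, 0 < Ls j.+1.
  elim=> [|j IH]; first by rewrite Ls1 divr_gt0.
  by have [i ->] := Ls_next j; rewrite mulr_gt0 ?divr_gt0 ?exprn_gt0.
have alpha_gt0 j : 0 < alpha j.+1.
  by have [root maxroot] := alpha_root j; exact: largest_root_gt0 (Ls_gt0 j) root maxroot.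
have A_ge0 : forall j, 0 <= A j.
  by elim=> [|j IH]; rewrite ?A0 // A_next addr_ge0 // ltW.
have wmean_step j p q :
    (A j.+1)^-1 *: (alpha j.+1 *: p + A j *: q) = wmean (alpha j.+1) (A j) p q.
  by rewrite /wmean A_next addrC.
have Qu j : Q (u j) by case: j => [|j]; [rewrite u0 | case: (u_next j)].
have Qx : forall j, Q (x j).
  elim=> [|j IH]; first by rewrite x0E.
  by rewrite x_next wmean_step; apply: convex_wmean.
have [_ u_min] := u_next k.
have step_rule : Ls k.+1 * alpha k.+1 ^+ 2 = alpha k.+1 + A k.
  by rewrite -(alpha_root k).1 addrC.
have phiconv := convex_fun_on_lfdD fdelta (g k.+1) (y k.+1) hconv.
have := mirror_triangle_step Qconv dC1 dsc phiconv (alpha_gt0 k) (A_ge0 k) step_rule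
  (Qu k) (Qu k.+1) (Qx k) Qz u_min.
rewrite -!wmean_step -y_next -x_next [A k.+1]A_next [A k + _]addrC; lra.
Qed.
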